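(* Fix integers $n\ge k\ge 1$, put $m=n-k$, and fix a partition $\lambda=(\lambda_1\ge\lambda_2\ge\cdots\ge\lambda_k\ge 0)$ with $\lambda_1\le m$. There is a bijection $\Phi$ from the set of Condensed Catalan tableaux of size $(k,n)$ and shape $\lambda$ to the set of weighted Catalan paths constrained by $\lambda$ which is weight-preserving in the sense that, for every such tableau $T$, the product of all symbols $\alpha,\beta$ in the filling of $T$ equals the weight of the path $\Phi(T)$. (Equivalently, $\mathrm{wt}(T)=\alpha^{k}\beta^{n-k}\cdot \mathrm{wt}(\Phi(T))$.)
   Context: The Young diagram of $\lambda$ (English convention) consists of boxes $(r,c)$ with $1\le r\le k$, $1\le c\le\lambda_r$; row $1$ is the top row and column $1$ the leftmost. A Condensed Catalan tableau of size $(k,n)$ and shape $\lambda$ is an assignment to each box of $\lambda$ of one of: $\alpha$, $\beta$, or empty, such that: (ii) if box $(r,c)$ contains $\beta$, every box $(r,c')$ with $c'<c$ is empty; (iii) if box $(r,c)$ contains $\alpha$, every box $(r',c)$ with $r'<r$ is empty; (iv) every box $(r,c)$ such that there is no $\alpha$ in any box $(r',c)$ with $r'>r$ and no $\beta$ in any box $(r,c')$ with $c'>c$ contains $\alpha$ or $\beta$. Its weight is $\mathrm{wt}(T)=\alpha^{k+a}\beta^{n-k+b}$, where $a$ and $b$ are the numbers of $\alpha$'s and $\beta$'s in the filling. Place $\lambda$ in the rectangle $[0,m]\times[0,k]$ of the plane, box $(r,c)$ occupying $[c-1,c]\times[k-r,k-r+1]$, and let $L$ be the lattice path from $(m,k)$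 to $(0,0)$ with unit south and west steps following the southeast boundary of $\lambda$ (so, with $\lambda_0:=m$ and $\lambda_{k+1}:=0$, the horizontal part of $L$ at height $y=k-i$ is the segment from $x=\lambda_{i+1}$ to $x=\lambda_i$, $0\le i\le k$). A Catalan path constrained by $\lambda$ is a lattice path from $(m,k)$ to $(0,0)$ with unit south and west steps that never crosses $L$; equivalently, it is determined by integers $C_1\ge C_2\ge\cdots\ge C_k\ge 0$ with $C_i\le\lambda_i$ for all $i$, where the unique south step crossing row $i$ (from height $k-i+1$ to $k-i$) is at $x=C_i$. Each step receives a label: a south step with $x>0$ (not on the west boundary of $\lambda$) gets $\beta$; a south step with $x=0$ gets $1$; a west step lying strictly above $L$ gets $\alpha$; a west step lying on $L$ gets $1$. The weight of the (weighted Catalan) path is the product of the labels of its steps. *)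

From HB Require Import structures.
From mathcomp Require Import all_boot.
Set Implicit Arguments. Unset Strict Implicit. Unset Printing Implicit Defensive.

Inductive sym := Alpha | Beta.
Definition sym2b (s : sym) : bool := if s is Alpha then true else false.
Definition b2sym (b : bool) : sym := if b then Alpha else Beta.
Lemma sym2bK : cancel sym2b b2sym. Proof. by case. Qed.
HB.instance Definition _ := Equality.copy sym (can_type sym2bK).

(* Conventions (0-based): row r : 'I_k stands for row r+1, column c : 'I_m
   for column c+1, lam r stands for lambda_{r+1}.  The box (r,c) lies in
   the Young diagram iff c < lam r.  A filling is a finite function on the
   k x m rectangle; None = empty box. *)

Definition is_CCT (k m : nat) (lam : 'I_k -> nat)
    (T : {ffun 'I_k * 'I_m -> option sym}) : bool :=
  [&&
      [forall r : 'I_k, forall c : 'I_m, (~~ (c < lam r)) ==> (T (r, c) == None)],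
      [forall r : 'I_k, forall c : 'I_m, (T (r, c) == Some Beta) ==>
          [forall c' : 'I_m, (c' < c) ==> (T (r, c') == None)]],
      [forall r : 'I_k, forall c : 'I_m, (T (r, c) == Some Alpha) ==>
          [forall r' : 'I_k, (r' < r) ==> (T (r', c) == None)]] &
      [forall r : 'I_k, forall c : 'I_m,
          [&& c < lam r,
              ~~ [exists r' : 'I_k, (r < r') && (T (r', c) == Some Alpha)] &
              ~~ [exists c' : 'I_m, (c < c') && (T (r, c') == Some Beta)]]
          ==> (T (r, c) != None)]].

(* Exponents of alpha and beta contributed by the filling:
   the product of all symbols of T is alpha^(tab_a T) beta^(tab_b T). *)
Definition tab_a k m (T : {ffun 'I_k * 'I_m -> option sym}) : nat :=
  #|[pred b | T b == Some Alpha]|.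
Definition tab_b k m (T : {ffun 'I_k * 'I_m -> option sym}) : nat :=
  #|[pred b | T b == Some Beta]|.

(* Extension of a row-indexed sequence f_1..f_k (stored 0-based) to indices
   0..k+1 with f_0 := m and f_{k+1} := 0 (and 0 beyond). *)
Definition ext (k m : nat) (f : 'I_k -> nat) (i : nat) : nat :=
  if i is j.+1 then (if insub j is Some o then f o else 0) else m.

(* A Catalan path constrained by lambda, encoded by C_1 >= ... >= C_k >= 0,
   C_i <= lambda_i; C i is the x-coordinate of the south step crossing
   row i+1.  Values lie in [0, m]. *)
Definition is_cpath (k m : nat) (lam : 'I_k -> nat)
    (C : {ffun 'I_k -> 'I_m.+1}) : bool :=
  [forall i : 'I_k, forall j : 'I_k, (i <= j) ==> (C j <= C i)]
  && [forall i : 'I_k, C i <= lam i].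

(* The unit west step [x-1,x] at height k-i (0 <= i <= k, 1 <= x <= m)
   lies on L iff it is contained in the horizontal segment of L at height
   k-i, namely [lambda_{i+1}, lambda_i]. *)
Definition onL (k m : nat) (lam : 'I_k -> nat) (i x : nat) : bool :=
  (ext m lam i.+1 <= x.-1) && (x <= ext m lam i).

(* The path has the west step [x-1,x] at height k-i iff C_{i+1} < x <= C_i
   (with C_0 = m, C_{k+1} = 0).  It is labelled alpha iff not on L
   (i.e. strictly above L), else 1. *)
Definition path_a (k m : nat) (lam : 'I_k -> nat)
    (C : {ffun 'I_k -> 'I_m.+1}) : nat :=
  #|[pred p : 'I_k.+1 * 'I_m |
      let i := val p.1 in let x := (val p.2).+1 in
      [&& ext m (fun j => val (C j)) i.+1 < x,
          x <= ext m (fun j => val (C j)) i &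
          ~~ onL m lam i x]]|.

(* South step crossing row i+1 is at x = C i; labelled beta iff x > 0. *)
Definition path_b (k m : nat) (C : {ffun 'I_k -> 'I_m.+1}) : nat :=
  #|[pred i : 'I_k | 0 < C i]|.
(* The weight of the path is alpha^(path_a) beta^(path_b). *)

From HB Require Import structures.
From mathcomp Require Import all_boot perm.
Set Implicit Arguments. Unset Strict Implicit. Unset Printing Implicit Defensive.

(* Each row of a Condensed Catalan tableau holds at most one beta, and the
   betas force the alphas: an alpha sits exactly in the boxes of lambda right
   of their row's beta such that every box of lambda below them in the column
   lies weakly left of the beta of its own row (alpha_box).  Encode T by b_r,
   one more than the column of the beta of row r (0 if none).  The path of T
   is C = the values b_r sorted decreasingly.  A valid b is recovered from its
   multiset of values by filling the rows bottom up: each row must receive the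
   largest remaining value fitting in it, which gives injectivity, and this
   greedy filling never gets stuck by a Hall-type count, which gives
   surjectivity.  Both weights only see the multiset {b_r}: the betas are the
   nonzero b_r, i.e. the south steps off the west boundary, and the alphas are
   the columns x with #{r | b_r > x} < #{r | lambda_r > x}, which are exactly
   the columns whose west step lies strictly above L. *)


Lemma card_ord_lt n p : p <= n -> #|[pred i : 'I_n | i < p]| = p.
Proof.
elim: p => [|p IHp] le_pn; first by apply: eq_card0 => i.
rewrite (cardD1 (Ordinal le_pn)) inE /= ltnSn add1n -[in RHS]IHp ?(ltnW le_pn) //.
by congr S; apply: eq_card => i; rewrite !inE -val_eqE /= ltnS ltn_neqAle.
Qed.

Lemma ltn_card_downclosed n (S : {pred 'I_n}) :
  (forall i j : 'I_n, j <= i -> i \in S -> j \in S) ->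
  forall x : 'I_n, (x < #|S|) = (x \in S).
Proof.
move=> closedS x; apply/idP/idP => [lt_xS|Sx].
  apply: contraLR lt_xS => notSx; rewrite -leqNgt.
  rewrite -[X in _ <= X](card_ord_lt (ltnW (ltn_ord x))).
  apply/subset_leq_card/subsetP => i Si; rewrite inE ltnNge.
  by apply: contra notSx => /closedS; apply.
rewrite -(card_ord_lt (ltn_ord x)); apply/subset_leq_card/subsetP => i.
by rewrite inE ltnS => /closedS; apply.
Qed.

Lemma card_preim_inj (T : finType) (f : T -> T) (p : pred T) :
  injective f -> #|[pred x | p (f x)]| = #|p|.
Proof.
move=> injf; rewrite (card_preim injf); apply: eq_card => y.
by rewrite !inE (inj_card_onto injf).
Qed.

Lemma exists_ord_max n (P : pred 'I_n) i0 :
  P i0 -> exists2 i, P i & forall j, P j -> j <= i.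
Proof. by move=> Pi0; case: (arg_maxnP val Pi0) => i; exists i. Qed.

Section RowCounts.
Variable k : nat.
Implicit Types (f g : 'I_k -> nat) (i j r : 'I_k).

Definition cnt_gt f (x : nat) : nat := #|[pred r | x < f r]|.

Definition nonincreasing f := forall i j, i <= j -> f j <= f i.

Lemma cnt_gt_le f x : cnt_gt f x <= k.
Proof. by rewrite -[X in _ <= X]card_ord max_card. Qed.

Lemma cnt_gt_homo f x y : x <= y -> cnt_gt f y <= cnt_gt f x.
Proof.
move=> le_xy; apply/subset_leq_card/subsetP => r; rewrite !inE.
exact: leq_ltn_trans.
Qed.

Lemma leq_cnt_gt f g x : (forall r, f r <= g r) -> cnt_gt f x <= cnt_gt g x.
Proof.
move=> le_fg; apply/subset_leq_card/subsetP => r; rewrite !inE => lt_xf.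
exact: leq_trans lt_xf (le_fg r).
Qed.

Lemma eq_cnt_gt f g : f =1 g -> cnt_gt f =1 cnt_gt g.
Proof. by move=> eq_fg x; apply: eq_card => r; rewrite !inE eq_fg. Qed.

Lemma ltn_cnt_gt f : nonincreasing f -> forall x i, (i < cnt_gt f x) = (x < f i).
Proof.
move=> f_nonincr x i; rewrite ltn_card_downclosed ?inE // => j j' le_j'j.
by rewrite !inE => /leq_trans; apply; apply: f_nonincr.
Qed.

Lemma card_eq_of_cnt_gt f g : cnt_gt f =1 cnt_gt g ->
  forall v, #|[pred r | f r == v]| = #|[pred r | g r == v]|.
Proof.
move=> eq_fg v.
have card_geq h : #|[pred r | v <= h r]| = #|[pred r | h r == v]| + cnt_gt h v.
  rewrite -(cardID [pred r | v < h r] [pred r | v <= h r]) addnC.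
  by congr (_ + _); apply: eq_card => r; rewrite !inE; case: ltngtP.
have : #|[pred r | v <= f r]| = #|[pred r | v <= g r]|.
  by case: v {card_geq} => [|v]; [apply: eq_card | apply: eq_fg].
by rewrite !card_geq eq_fg => /addIn.
Qed.

Lemma exists_between_cnt_gt f g x : (forall r, f r <= g r) ->
  [exists r, f r <= x < g r] = (cnt_gt f x < cnt_gt g x).
Proof.
move=> le_fg; have sub_fg : [pred r | x < f r] \subset [pred r | x < g r].
  by apply/subsetP => r; rewrite !inE => /leq_trans; apply.
apply/existsP/idP => [[r /andP[le_fx lt_xg]]|lt_cnt].
  apply: proper_card; rewrite properE sub_fg /=; apply/subsetPn.
  by exists r; rewrite inE // -leqNgt.
have /subsetPn[r] : ~~ ([pred r | x < g r] \subset [pred r | x < f r]).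
  by apply: contraL lt_cnt => /subset_leq_card; rewrite -leqNgt.
by rewrite !inE -leqNgt => lt_xg le_fx; exists r; rewrite le_fx.
Qed.

Variable m : nat.

(* The (i+1)-st largest value of f, capped at m: the number of x < m exceeded
   by more than i values of f. *)
Definition dsort f i : nat := #|[pred c : 'I_m | i < cnt_gt f c]|.

Lemma dsort_le f i : dsort f i <= m.
Proof. by rewrite -[X in _ <= X]card_ord max_card. Qed.

Lemma dsort_nonincr f : nonincreasing (dsort f).
Proof.
move=> i j le_ij; apply/subset_leq_card/subsetP => c; rewrite !inE.
exact: leq_ltn_trans.
Qed.

Lemma ltn_dsort f i x : x < m -> (x < dsort f i) = (i < cnt_gt f x).
Proof.
move=> lt_xm; rewrite (ltn_card_downclosed _ (Ordinal lt_xm)) ?inE //.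
by move=> c c' le_c'c; rewrite !inE => /leq_trans; apply; apply: cnt_gt_homo.
Qed.

Lemma cnt_gt_dsort f : (forall r, f r <= m) -> cnt_gt (dsort f) =1 cnt_gt f.
Proof.
move=> le_fm x; have [lt_xm|le_mx] := ltnP x m.
  rewrite /cnt_gt -[RHS](card_ord_lt (cnt_gt_le f x)).
  by apply: eq_card => i; rewrite !inE ltn_dsort.
rewrite /cnt_gt !eq_card0 // => i; rewrite inE; apply/negbTE; rewrite -leqNgt.
  exact: leq_trans (le_fm i) le_mx.
exact: leq_trans (dsort_le f i) le_mx.
Qed.

Lemma dsort_id f : nonincreasing f -> (forall r, f r <= m) -> dsort f =1 f.
Proof.
move=> f_nonincr le_fm i; rewrite /dsort -[RHS](card_ord_lt (le_fm i)).
by apply: eq_card => c; rewrite !inE ltn_cnt_gt.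
Qed.

Lemma eq_dsort f g : cnt_gt f =1 cnt_gt g -> dsort f =1 dsort g.
Proof. by move=> eq_fg i; apply: eq_card => c; rewrite !inE eq_fg. Qed.

Lemma dsort_leq lam f : nonincreasing lam -> (forall r, lam r <= m) ->
  (forall r, f r <= lam r) -> forall i, dsort f i <= lam i.
Proof.
move=> lam_nonincr le_lam_m le_f_lam i.
rewrite -[X in _ <= X](card_ord_lt (le_lam_m i)).
apply/subset_leq_card/subsetP => c; rewrite !inE -(ltn_cnt_gt lam_nonincr).
by move/leq_trans; apply; apply: leq_cnt_gt.
Qed.

End RowCounts.

Section Admissible.
Variables (k : nat) (lam : 'I_k -> nat).
Hypothesis lam_nonincr : nonincreasing lam.
Implicit Types (b C : 'I_k -> nat) (r s t : 'I_k).

(* In tableau terms: no row above s has its beta inside row s strictly right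
   of the beta of row s. *)
Definition row_admissible b s :=
  b s <= lam s /\ forall t, t < s -> ~~ (b s < b t <= lam s).

Definition admissible b := forall s, row_admissible b s.

Lemma admissible_le b : admissible b -> forall r, b r <= lam r.
Proof. by move=> adm_b r; case: (adm_b r). Qed.

Lemma leq_admissible_row b1 b2 s :
  row_admissible b1 s -> b2 s <= lam s ->
  (forall v, #|[pred r | b1 r == v]| = #|[pred r | b2 r == v]|) ->
  (forall t, s < t -> b1 t = b2 t) -> b2 s <= b1 s.
Proof.
move=> [_ adm1] le_b2_lam eq_mult eq_below; rewrite leqNgt; apply/negP => lt_b1s.
set v := b2 s.
have split_at_s b : #|[pred r | b r == v]| =
    #|[pred r : 'I_k | (r <= s) && (b r == v)]| + #|[pred r : 'I_k | (s < r) && (b r == v)]|.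
  rewrite -(cardID [pred r : 'I_k | r <= s] [pred r | b r == v]).
  congr (_ + _); apply: eq_card => r; rewrite !inE; first exact: andbC.
  by rewrite ltnNge.
have eq_above : #|[pred r : 'I_k | (r <= s) && (b1 r == v)]| =
                #|[pred r : 'I_k | (r <= s) && (b2 r == v)]|.
  apply/(@addIn #|[pred r : 'I_k | (s < r) && (b2 r == v)]|).
  rewrite -split_at_s -eq_mult split_at_s; congr (_ + _).
  by apply: eq_card => r; rewrite !inE; case: (ltnP s r) => // /eq_below ->.
have /card_gt0P[t] : 0 < #|[pred r : 'I_k | (r <= s) && (b1 r == v)]|.
  by rewrite eq_above; apply/card_gt0P; exists s; rewrite inE leqnn eqxx.
rewrite inE leq_eqVlt => /andP[/orP[/eqP/val_inj-> | lt_ts] /eqP b1t].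
  by rewrite b1t ltnn in lt_b1s.
by move: (adm1 t lt_ts); rewrite b1t lt_b1s le_b2_lam.
Qed.

Lemma admissible_inj b1 b2 : admissible b1 -> admissible b2 ->
  cnt_gt b1 =1 cnt_gt b2 -> b1 =1 b2.
Proof.
move=> adm1 adm2 eq_cnt.
have eq_mult := card_eq_of_cnt_gt eq_cnt.
suff eq_from d s : k - d <= s -> b1 s = b2 s.
  by move=> s; apply: (eq_from k); rewrite subnn.
elim: d s => [|d IHd] s le_s; first by have := leq_ltn_trans le_s (ltn_ord s); rewrite subn0 ltnn.
have [|lt_s] := leqP (k - d) s; first exact: IHd.
have eq_below t : s < t -> b1 t = b2 t.
  move=> lt_st; apply: IHd; apply: leq_trans lt_st.
  by rewrite -(prednK (leq_ltn_trans (leq0n s) lt_s)) ltnS -subnS.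
apply/eqP; rewrite eqn_leq; apply/andP; split.
  apply: leq_admissible_row (adm2 s) (admissible_le adm1 s) _ _ => [v|t /eq_below //].
  by rewrite eq_mult.
exact: leq_admissible_row (adm1 s) (admissible_le adm2 s) eq_mult eq_below.
Qed.

(* Hall-type condition on the rows above p, which have not been placed yet. *)
Definition hall_above p b := forall x,
  #|[pred t : 'I_k | (t < p) && (x < b t)]| <= #|[pred t : 'I_k | (t < p) && (x < lam t)]|.

(* Invariant of the greedy placement of the values of C, from the bottom row up. *)
Definition placed_from C p b :=
  [/\ cnt_gt b =1 cnt_gt C, forall s, p <= s -> row_admissible b s & hall_above p b].

Lemma hall_above_fit b s : hall_above s.+1 b -> exists t, (t <= s) && (b t <= lam s).
Proof.
move=> hall; apply/existsP; apply: contraT => /existsPn no_fit.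
have card_b : #|[pred t : 'I_k | (t < s.+1) && (lam s < b t)]| = s.+1.
  rewrite -[RHS](card_ord_lt (ltn_ord s)); apply: eq_card => t.
  by rewrite !inE ltnS; case: (leqP t s) => //= le_ts; move: (no_fit t); rewrite le_ts ltnNge.
have card_lam : #|[pred t : 'I_k | (t < s.+1) && (lam s < lam t)]| <= s.
  rewrite -[X in _ <= X](card_ord_lt (ltnW (ltn_ord s))).
  apply/subset_leq_card/subsetP => t; rewrite !inE ltnS leq_eqVlt.
  by case/andP=> /orP[/eqP/val_inj-> | //]; rewrite ltnn.
by have := leq_trans (hall (lam s)) card_lam; rewrite card_b ltnn.
Qed.

Section GreedyStep.
Variables (b : 'I_k -> nat) (s ta : 'I_k).
Hypotheses (le_ta_s : ta <= s) (fit_ta : b ta <= lam s).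
Hypothesis max_ta : forall t, (t <= s) && (b t <= lam s) -> b t <= b ta.

Let sw := tperm s ta.

Let tperm_leq t : (sw t <= s) = (t <= s).
Proof. by rewrite /sw; case: tpermP => [->|->|] //; rewrite leqnn le_ta_s. Qed.

Let tperm_below t : s < t -> sw t = t.
Proof.
move=> lt_st; apply: tpermD; apply/eqP => eq_t; move: lt_st; rewrite -eq_t ?ltnn //.
by rewrite ltnNge le_ta_s.
Qed.

Lemma cnt_gt_swap : cnt_gt (b \o sw) =1 cnt_gt b.
Proof. by move=> x; apply: (card_preim_inj [pred r | x < b r] (@perm_inj _ sw)). Qed.

Lemma row_admissible_swap : row_admissible (b \o sw) s.
Proof.
rewrite /row_admissible /= /sw tpermL; split=> // t lt_ts.
apply/negP => /andP[lt_b fit_t].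
have le_t : sw t <= s by rewrite tperm_leq ltnW.
by have := @max_ta (sw t); rewrite le_t fit_t leqNgt lt_b => /(_ isT).
Qed.

Lemma row_admissible_swap_below s' : s < s' ->
  row_admissible b s' -> row_admissible (b \o sw) s'.
Proof.
move=> lt_ss' [fit_s' adm_s']; rewrite /row_admissible /= tperm_below //.
split=> // t lt_ts'; have [le_ts|lt_st] := leqP t s.
  by apply: adm_s'; rewrite (leq_ltn_trans _ lt_ss') ?tperm_leq.
by rewrite tperm_below //; apply: adm_s'.
Qed.

Lemma hall_above_swap : hall_above s.+1 b -> hall_above s (b \o sw).
Proof.
move=> hall x; have [le_lam_x|lt_x_lam] := leqP (lam s) x.
  have -> : #|[pred t : 'I_k | (t < s) && (x < lam t)]| =
            #|[pred t : 'I_k | (t < s.+1) && (x < lam t)]|.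
    apply: eq_card => t; rewrite !inE [t < s.+1]ltnS [t <= s]leq_eqVlt.
    by case: eqP => [/val_inj->|] //=; rewrite ltnn ltnNge le_lam_x.
  apply: leq_trans (hall x).
  rewrite -(card_preim_inj [pred t : 'I_k | (t < s.+1) && (x < b t)] (@perm_inj _ sw)).
  apply/subset_leq_card/subsetP => t; rewrite !inE /= ltnS tperm_leq.
  by case/andP=> /ltnW-> ->.
have -> : #|[pred t : 'I_k | (t < s) && (x < lam t)]| = s.
  rewrite -[RHS](card_ord_lt (ltnW (ltn_ord s))); apply: eq_card => t.
  rewrite !inE; case: (ltnP t s) => //= lt_ts.
  exact: leq_trans lt_x_lam (lam_nonincr (ltnW lt_ts)).
rewrite -[X in _ <= X](card_ord_lt (ltnW (ltn_ord s))).
by apply/subset_leq_card/subsetP => t; rewrite !inE => /andP[].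
Qed.

End GreedyStep.

Lemma placed_from_step C s b : placed_from C s.+1 b -> exists b', placed_from C s b'.
Proof.
case=> eq_cnt adm_below hall; have [t0 fit_t0] := hall_above_fit hall.
case: (@arg_maxnP _ t0 (fun t => (t <= s) && (b t <= lam s)) b fit_t0).
move=> ta /andP[le_ta_s fit_ta] max_ta.
exists (b \o tperm s ta); split.
- by move=> x; rewrite cnt_gt_swap.
- move=> s'; rewrite leq_eqVlt => /orP[/eqP/val_inj<- | lt_ss'].
    exact: row_admissible_swap.
  exact: row_admissible_swap_below (adm_below _ lt_ss').
- exact: hall_above_swap.
Qed.

Lemma exists_admissible C : (forall r, C r <= lam r) ->
  exists2 b, admissible b & cnt_gt b =1 cnt_gt C.
Proof.
move=> le_C_lam.
suff [b [eq_cnt adm _]] : exists b, placed_from C 0 b by exists b => // s; apply: adm.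
suff placed_down d : d <= k -> exists b, placed_from C (k - d) b.
  by have := placed_down k (leqnn k); rewrite subnn.
elim: d => [|d IHd] le_dk.
  exists C; rewrite subn0; split=> // [s|x]; first by rewrite leqNgt ltn_ord.
  apply/subset_leq_card/subsetP => t; rewrite !inE => /andP[-> lt_xC].
  exact: leq_trans lt_xC (le_C_lam t).
have [b placed_b] := IHd (ltnW le_dk).
have lt_k : k - d.+1 < k by rewrite ltn_subrL (leq_ltn_trans (leq0n d) le_dk).
by apply: (@placed_from_step _ (Ordinal lt_k) b); rewrite /= subnSK.
Qed.

End Admissible.

Section Tableaux.
Variables (k m : nat) (lam : 'I_k -> nat).
Hypothesis le_lam_m : forall r, lam r <= m.
Implicit Types (T : {ffun 'I_k * 'I_m -> option sym}) (b : 'I_k -> nat).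
Implicit Types (r s t : 'I_k) (c : 'I_m).

Lemma is_CCTP T : reflect
  [/\ forall r c, ~~ (c < lam r) -> T (r, c) = None,
      forall r c c', T (r, c) = Some Beta -> c' < c -> T (r, c') = None,
      forall r r' c, T (r, c) = Some Alpha -> r' < r -> T (r', c) = None &
      forall r c, c < lam r ->
        (forall r', r < r' -> T (r', c) <> Some Alpha) ->
        (forall c', c < c' -> T (r, c') <> Some Beta) -> T (r, c) <> None]
  (is_CCT lam T).
Proof.
apply: (iffP and4P) => [[/forallP out /forallP betaL /forallP alphaU /forallP filled]|].
  split=> [r c|r c c' Tb lt_c'c|r r' c Ta lt_r'r|r c in_lam no_alpha no_beta].
  - by move/forallP: (out r) => /(_ c) /implyP/[apply]/eqP.
  - move/forallP: (betaL r) => /(_ c); rewrite Tb eqxx.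
    by move=> /forallP /(_ c') /implyP/(_ lt_c'c)/eqP.
  - move/forallP: (alphaU r) => /(_ c); rewrite Ta eqxx.
    by move=> /forallP /(_ r') /implyP/(_ lt_r'r)/eqP.
  - apply/eqP; move/forallP: (filled r) => /(_ c) /implyP; apply.
    rewrite in_lam /=; apply/andP; split; apply/existsPn.
      by move=> r'; apply/negP => /andP[lt /eqP]; exact: no_alpha.
    by move=> c'; apply/negP => /andP[lt /eqP]; exact: no_beta.
move=> [out betaL alphaU filled]; split; apply/forallP => r; apply/forallP => c; apply/implyP.
- by move=> /out ->.
- by move=> /eqP Tb; apply/forallP => c'; apply/implyP => /(betaL _ _ _ Tb) ->.
- by move=> /eqP Ta; apply/forallP => r'; apply/implyP => /(alphaU _ _ _ Ta) ->.
- case/and3P=> in_lam no_alpha no_beta; apply/eqP; apply: filled => // [r' lt|c' lt] T_eq.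
    by move/existsP: no_alpha; apply; exists r'; rewrite lt T_eq.
  by move/existsP: no_beta; apply; exists c'; rewrite lt T_eq.
Qed.

Definition beta_col T r : nat :=
  if [pick c | T (r, c) == Some Beta] is Some c then c.+1 else 0.

Definition alpha_box b r c : bool :=
  [&& c < lam r, b r <= c & [forall r' : 'I_k, (r < r') && (c < lam r') ==> (c < b r')]].

Definition tableau_of b : {ffun 'I_k * 'I_m -> option sym} :=
  [ffun p : 'I_k * 'I_m => if b p.1 == p.2.+1 then Some Beta
             else if alpha_box b p.1 p.2 then Some Alpha else None].

Lemma tableau_ofE b r c : tableau_of b (r, c) =
  if b r == c.+1 then Some Beta else if alpha_box b r c then Some Alpha else None.
Proof. by rewrite ffunE. Qed.

Lemma tableau_of_beta b r c : (tableau_of b (r, c) == Some Beta) = (b r == c.+1).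
Proof. by rewrite tableau_ofE; case: (eqVneq (b r) c.+1) => // _; case: alpha_box. Qed.

Lemma tableau_of_alpha b r c : (tableau_of b (r, c) == Some Alpha) = alpha_box b r c.
Proof.
rewrite tableau_ofE; case: (eqVneq (b r) c.+1) => [b_r|_]; last by case: alpha_box.
by rewrite /alpha_box b_r ltnn andbF.
Qed.

Lemma eq_tableau_of b1 b2 : b1 =1 b2 -> tableau_of b1 = tableau_of b2.
Proof.
move=> eq_b; apply/ffunP => -[r c]; rewrite !tableau_ofE /alpha_box eq_b.
by under eq_forallb => r' do rewrite eq_b.
Qed.

Lemma beta_col_gt0 T r : 0 < beta_col T r ->
  exists2 c : 'I_m, beta_col T r = c.+1 & T (r, c) = Some Beta.
Proof. by rewrite /beta_col; case: pickP => // c /eqP Tc _; exists c. Qed.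

Section OfTableau.
Variable T : {ffun 'I_k * 'I_m -> option sym}.
Hypothesis T_CCT : is_CCT lam T.

Lemma beta_colE r c : (beta_col T r == c.+1) = (T (r, c) == Some Beta).
Proof.
have [_ betaL _ _] := is_CCTP T T_CCT.
rewrite /beta_col; case: pickP => [c' /eqP Tc'|no_beta]; last by rewrite no_beta.
rewrite eqSS; apply/eqP/eqP => [/val_inj<- //|Tc].
by case: (ltngtP c c') => [/(betaL _ _ _ Tc')|/(betaL _ _ _ Tc)|/val_inj//]; rewrite ?Tc ?Tc'.
Qed.

Lemma beta_right r c c' : T (r, c') = Some Beta -> c <= c' -> c < beta_col T r.
Proof. by move/eqP; rewrite -beta_colE => /eqP->. Qed.

Lemma beta_col_le r : beta_col T r <= lam r.
Proof.
have [out _ _ _] := is_CCTP T T_CCT.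
case: (posnP (beta_col T r)) => [-> //|/beta_col_gt0[c -> Tc]].
by apply: contraTT isT => /out; rewrite Tc.
Qed.

Lemma admissible_beta_col : admissible lam (beta_col T).
Proof.
have [_ _ alphaU filled] := is_CCTP T T_CCT.
move=> s; split=> [|t lt_ts]; first exact: beta_col_le.
apply/negP => /andP[lt_b fit_t].
have [c b_t Tt] := beta_col_gt0 (leq_ltn_trans (leq0n _) lt_b).
move: lt_b fit_t; rewrite b_t => lt_b fit_t.
case E : (T (s, c)) => [[]|].
- by move: (alphaU _ _ _ E lt_ts); rewrite Tt.
- by move: lt_b; rewrite ltnS leqNgt (beta_right E).
- apply: (filled s c fit_t) => // [r' lt_sr' Ta|c' lt_cc' Tb].
    by move: (alphaU _ _ _ Ta (ltn_trans lt_ts lt_sr')); rewrite Tt.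
  by move: lt_b; rewrite ltnS leqNgt (beta_right Tb (ltnW lt_cc')).
Qed.

Lemma alpha_box_of_alpha r c : T (r, c) = Some Alpha -> alpha_box (beta_col T) r c.
Proof.
have [out betaL alphaU filled] := is_CCTP T T_CCT => Ta.
have in_lam : c < lam r by apply: contraTT isT => /out; rewrite Ta.
apply/and3P; split=> //.
  rewrite leqNgt; apply/negP => lt_cb.
  have [c' b_r Tb] := beta_col_gt0 (leq_ltn_trans (leq0n c) lt_cb).
  move: lt_cb; rewrite b_r ltnS leq_eqVlt => /orP[/eqP/val_inj eq_c | lt_cc'].
    by move: Tb; rewrite -eq_c Ta.
  by move: (betaL _ _ _ Tb lt_cc'); rewrite Ta.
apply/forallP => r'; apply/implyP => /andP[lt_rr' in_lam'].
rewrite ltnNge; apply/negP => le_b.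
case E : (T (r', c)) => [[]|].
- by move: (alphaU _ _ _ E lt_rr'); rewrite Ta.
- by move: le_b; rewrite leqNgt (beta_right E).
- apply: (filled r' c in_lam') => // [r'' lt Ta''|c' lt Tb].
    by move: (alphaU _ _ _ Ta'' (ltn_trans lt_rr' lt)); rewrite Ta.
  by move: le_b; rewrite leqNgt (beta_right Tb (ltnW lt)).
Qed.

Lemma alpha_boxE r c : (T (r, c) == Some Alpha) = alpha_box (beta_col T) r c.
Proof.
apply/eqP/idP => [/alpha_box_of_alpha //|/and3P[in_lam le_b /forallP below]].
have [_ _ _ filled] := is_CCTP T T_CCT.
case E : (T (r, c)) => [[]|] //.
  by move: le_b; rewrite leqNgt (beta_right E).
exfalso; apply: (filled r c in_lam) => // [r' lt Ta|c' lt Tb].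
  case/and3P: (alpha_box_of_alpha Ta) => in_lam' le_b' _.
  by move: (below r'); rewrite lt in_lam' ltnNge le_b'.
by move: le_b; rewrite leqNgt (beta_right Tb (ltnW lt)).
Qed.

Lemma beta_colK : tableau_of (beta_col T) = T.
Proof.
apply/ffunP => -[r c]; rewrite tableau_ofE beta_colE -alpha_boxE.
by case: (T (r, c)) => [[]|].
Qed.

End OfTableau.

Lemma tableau_ofK b : (forall r, b r <= lam r) -> beta_col (tableau_of b) =1 b.
Proof.
move=> le_b_lam r; rewrite /beta_col; case: pickP => [c|no_beta].
  by rewrite tableau_of_beta => /eqP.
case b_r : (b r) => [//|c]; have lt_cm : c < m by rewrite -b_r (leq_trans (le_b_lam r)).
by move: (no_beta (Ordinal lt_cm)); rewrite tableau_of_beta b_r eqxx.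
Qed.

Lemma alpha_below_tableau_of b r c : c < lam r -> b r <= c -> ~~ alpha_box b r c ->
  exists2 r' : 'I_k, r < r' & tableau_of b (r', c) = Some Alpha.
Proof.
rewrite /alpha_box => in_lam le_b; rewrite in_lam le_b /= => /forallPn[r0].
rewrite negb_imply -leqNgt => fit_r0.
have [r' /andP[/andP[lt_rr' in_lam'] le_b'] max_r'] :=
  @exists_ord_max _ (fun r' => (r < r') && (c < lam r') && (b r' <= c)) r0 fit_r0.
exists r' => //; apply/eqP; rewrite tableau_of_alpha /alpha_box in_lam' le_b' /=.
apply/forallP => r''; apply/implyP => /andP[lt_r'r'' in_lam'']; rewrite ltnNge.
apply/negP => le_b''; have := max_r' r''.
by rewrite (ltn_trans lt_rr' lt_r'r'') in_lam'' le_b'' leqNgt lt_r'r'' => /(_ isT).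
Qed.

Lemma is_CCT_tableau_of b : admissible lam b -> is_CCT lam (tableau_of b).
Proof.
move=> adm_b; have le_b_lam := admissible_le adm_b.
apply/is_CCTP; split=> [r c|r c c'|r r' c|r c in_lam no_alpha no_beta].
- rewrite -leqNgt tableau_ofE /alpha_box => le_lam_c.
  rewrite ltnNge le_lam_c; case: eqP => // b_r.
  by move: (le_b_lam r); rewrite b_r leqNgt ltnS le_lam_c.
- move/eqP; rewrite tableau_of_beta => /eqP b_r lt_c'c.
  by rewrite tableau_ofE /alpha_box b_r eqSS (gtn_eqF lt_c'c) [c < c']ltnNge (ltnW lt_c'c) andbF.
- move/eqP; rewrite tableau_of_alpha => /and3P[in_lam le_b /forallP below] lt_r'r.
  rewrite tableau_ofE; case: eqP => [b_r'|_].
    by have [_ /(_ r' lt_r'r)] := adm_b r; rewrite b_r' ltnS le_b in_lam.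
  case alpha_r' : (alpha_box b r' c) => //; case/and3P: alpha_r' => _ _ /forallP.
  by move=> /(_ r); rewrite lt_r'r in_lam /= ltnNge le_b.
- rewrite tableau_ofE; case: eqP => // b_r.
  have le_b : b r <= c.
    rewrite leqNgt; apply/negP => lt_cb.
    have := @beta_col_gt0 (tableau_of b) r; rewrite tableau_ofK //.
    case=> [|c' b_r' Tb]; first exact: leq_ltn_trans (leq0n c) lt_cb.
    apply: (no_beta c' _ Tb); rewrite -ltnS -b_r' ltn_neqAle lt_cb andbT eq_sym.
    exact/eqP.
  case alpha_r : (alpha_box b r c) => //.
  have [r' lt_rr' Ta] := alpha_below_tableau_of in_lam le_b (negbT alpha_r).
  by move: (no_alpha r' lt_rr').
Qed.

Lemma tab_a_tableau_of b : tab_a (tableau_of b) =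
  #|[pred c : 'I_m | [exists r, b r <= c < lam r]]|.
Proof.
rewrite /tab_a -(card_in_image (f := snd)).
  apply: eq_card => c; rewrite inE; apply/imageP/existsP.
    case=> [[r c'] alpha_rc ->] /=; move: alpha_rc; rewrite inE tableau_of_alpha.
    by case/and3P=> in_lam le_b _; exists r; rewrite le_b.
  case=> r0 fit_r0; have [r /andP[le_b in_lam] max_r] :=
    @exists_ord_max _ (fun r => b r <= c < lam r) r0 fit_r0.
  exists (r, c) => //; rewrite inE tableau_of_alpha /alpha_box in_lam le_b /=.
  apply/forallP => r'; apply/implyP => /andP[lt_rr' in_lam']; rewrite ltnNge.
  by apply: contraL lt_rr' => le_b'; rewrite -leqNgt max_r // le_b'.
move=> [r c] [r' c']; rewrite !inE !tableau_of_alpha /= => alpha_rc alpha_r'c' eq_c.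
move: alpha_r'c'; rewrite -eq_c => /and3P[in_lam' le_b' /forallP below'].
case/and3P: alpha_rc => in_lam le_b /forallP below.
case: (ltngtP r r') => [lt|lt|/val_inj-> //].
  by move: (below r'); rewrite lt in_lam' ltnNge le_b'.
by move: (below' r); rewrite lt in_lam ltnNge le_b.
Qed.

Lemma tab_b_tableau_of b : (forall r, b r <= lam r) ->
  tab_b (tableau_of b) = #|[pred r | 0 < b r]|.
Proof.
move=> le_b_lam; rewrite /tab_b -(card_in_image (f := fst)).
  apply: eq_card => r; rewrite inE; apply/imageP/idP.
    by case=> [[r' c] beta_rc ->] /=; move: beta_rc; rewrite inE tableau_of_beta => /eqP->.
  move=> b_pos; have lt_m : (b r).-1 < m.
    by rewrite prednK // (leq_trans (le_b_lam r)).
  by exists (r, Ordinal lt_m); rewrite // inE tableau_of_beta /= prednK.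
move=> [r c] [r' c']; rewrite !inE !tableau_of_beta /= => /eqP b_r /eqP + eq_r.
by rewrite -eq_r b_r => -[/val_inj->].
Qed.

End Tableaux.

Section Paths.
Variables (k m : nat) (lam : 'I_k -> nat).
Hypothesis lam_nonincr : nonincreasing lam.
Implicit Types (f : 'I_k -> nat) (C : {ffun 'I_k -> 'I_m.+1}).

Arguments ext : simpl never.

Lemma is_cpathP C :
  reflect (nonincreasing (fun i => val (C i)) /\ forall i, C i <= lam i) (is_cpath lam C).
Proof.
apply: (iffP andP) => [[/forallP C_nonincr /forallP le_C_lam]|[C_nonincr le_C_lam]].
  by split=> // i j le_ij; move/forallP: (C_nonincr i) => /(_ j) /implyP; apply.
split; apply/forallP => i; last exact: le_C_lam.
by apply/forallP => j; apply/implyP => /C_nonincr.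
Qed.

Lemma ext_ord f i (lt_ik : i < k) : ext m f i.+1 = f (Ordinal lt_ik).
Proof. by rewrite /ext insubT. Qed.

Lemma ext_out f i : k <= i -> ext m f i.+1 = 0.
Proof. by move=> le_ki; rewrite /ext insubF // ltnNge le_ki. Qed.

Lemma ltn_ext f x i : nonincreasing f -> x < m -> (x < ext m f i) = (i <= cnt_gt f x).
Proof.
move=> f_nonincr lt_xm; case: i => [//|i]; have [lt_ik|le_ki] := ltnP i k.
  by rewrite (ext_ord _ lt_ik) -(ltn_cnt_gt f_nonincr).
by rewrite ext_out // ltn0 ltnNge (leq_trans (cnt_gt_le f x) le_ki).
Qed.

Lemma path_stepE (C : 'I_k -> nat) i (x : 'I_m) :
  nonincreasing C -> (forall r, C r <= lam r) ->
  [&& ext m C i.+1 < x.+1, x.+1 <= ext m C i & ~~ onL m lam i x.+1] =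
  (i == cnt_gt C x) && (cnt_gt C x < cnt_gt lam x).
Proof.
move=> C_nonincr le_C_lam; have lt_xm := ltn_ord x.
rewrite /onL /= ltnS leqNgt !ltn_ext // -ltnNge ltnS andbA -eqn_leq eq_sym.
case: eqP => //= ->.
by rewrite leqNgt ltn_ext // (leq_cnt_gt x le_C_lam) andbT negbK.
Qed.

Lemma path_aE C : is_cpath lam C ->
  path_a lam C = #|[pred x : 'I_m | cnt_gt (fun r => val (C r)) x < cnt_gt lam x]|.
Proof.
case/is_cpathP => C_nonincr le_C_lam; set Cv := fun r => val (C r).
rewrite /path_a -(card_in_image (f := snd)).
  apply: eq_card => x; rewrite inE; apply/imageP/idP => [[[i x'] + ->]|lt_cnt].
    by rewrite inE /= path_stepE // => /andP[].
  have lt_cnt_k : cnt_gt Cv x < k.+1 by rewrite ltnS cnt_gt_le.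
  by exists (Ordinal lt_cnt_k, x); rewrite // inE /= path_stepE // eqxx.
move=> [i x] [i' x']; rewrite !inE /= !path_stepE // => /andP[/eqP eq_i _] /andP[/eqP eq_i' _].
by move=> /= eq_x; congr pair => //; apply: val_inj; rewrite /= eq_i eq_i' eq_x.
Qed.

End Paths.

Section Bijection.
Variables (k m : nat) (lam : 'I_k -> nat).
Hypotheses (lam_nonincr : nonincreasing lam) (le_lam_m : forall r, lam r <= m).
Implicit Types (T : {ffun 'I_k * 'I_m -> option sym}) (C : {ffun 'I_k -> 'I_m.+1}).

Definition path_of_tableau T : {ffun 'I_k -> 'I_m.+1} :=
  [ffun i => inord (dsort m (beta_col T) i)].

Lemma path_of_tableauE T i : val (path_of_tableau T i) = dsort m (beta_col T) i.
Proof. by rewrite ffunE /= inordK // ltnS dsort_le. Qed.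

Lemma cnt_gt_path_of_tableau T : is_CCT lam T ->
  cnt_gt (fun i => val (path_of_tableau T i)) =1 cnt_gt (beta_col T).
Proof.
move=> T_CCT x; rewrite -(cnt_gt_dsort (fun r => leq_trans (beta_col_le T_CCT r) (le_lam_m r))).
by apply: eq_cnt_gt => i; rewrite path_of_tableauE.
Qed.

Lemma is_cpath_path_of_tableau T : is_CCT lam T -> is_cpath lam (path_of_tableau T).
Proof.
move=> T_CCT; apply/is_cpathP; split=> [i j le_ij|i]; rewrite !path_of_tableauE.
  exact: dsort_nonincr.
by rewrite dsort_leq // => r; apply: beta_col_le.
Qed.

Lemma path_of_tableau_inj T1 T2 : is_CCT lam T1 -> is_CCT lam T2 ->
  path_of_tableau T1 = path_of_tableau T2 -> T1 = T2.
Proof.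
move=> T1_CCT T2_CCT eq_path.
have eq_cnt : cnt_gt (beta_col T1) =1 cnt_gt (beta_col T2).
  move=> x; rewrite -(cnt_gt_path_of_tableau T1_CCT) -(cnt_gt_path_of_tableau T2_CCT).
  by rewrite eq_path.
rewrite -(beta_colK T1_CCT) -(beta_colK T2_CCT).
apply: eq_tableau_of.
exact: admissible_inj (admissible_beta_col T1_CCT) (admissible_beta_col T2_CCT) eq_cnt.
Qed.

Lemma path_of_tableau_surj C : is_cpath lam C ->
  exists2 T, is_CCT lam T & path_of_tableau T = C.
Proof.
case/is_cpathP => C_nonincr le_C_lam.
have [b adm_b eq_cnt] := exists_admissible lam_nonincr le_C_lam.
exists (tableau_of m lam b); first exact: is_CCT_tableau_of.
apply/ffunP => i; apply: val_inj; rewrite path_of_tableauE.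
rewrite (eq_dsort _ (eq_cnt_gt (tableau_ofK le_lam_m (admissible_le adm_b)))).
by rewrite (eq_dsort _ eq_cnt) dsort_id // => r; rewrite -ltnS.
Qed.

Lemma weight_path_of_tableau T : is_CCT lam T ->
  (tab_a T, tab_b T) = (path_a lam (path_of_tableau T), path_b (path_of_tableau T)).
Proof.
move=> T_CCT; have le_b_lam := beta_col_le T_CCT.
rewrite path_aE ?is_cpath_path_of_tableau // -{1 2}(beta_colK T_CCT).
rewrite tab_a_tableau_of tab_b_tableau_of //; congr pair.
  apply: eq_card => x; rewrite !inE exists_between_cnt_gt //.
  by rewrite cnt_gt_path_of_tableau.
exact: esym (cnt_gt_path_of_tableau T_CCT 0).
Qed.

End Bijection.

Theorem proposition3p1 (n k : nat) (hk : 1 <= k) (hkn : k <= n)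
    (lam : 'I_k -> nat)
    (hlam_mono : forall i j : 'I_k, i <= j -> lam j <= lam i)
    (hlam1 : forall i : 'I_k, val i = 0 -> lam i <= n - k) :
  exists Phi : {ffun 'I_k * 'I_(n - k) -> option sym} ->
               {ffun 'I_k -> 'I_(n - k).+1},
    [/\ forall T, is_CCT lam T -> is_cpath lam (Phi T),
        forall T1 T2, is_CCT lam T1 -> is_CCT lam T2 ->
          Phi T1 = Phi T2 -> T1 = T2,
        forall C, is_cpath lam C -> exists2 T, is_CCT lam T & Phi T = C &
        forall T, is_CCT lam T ->
          (tab_a T, tab_b T) = (path_a lam (Phi T), path_b (Phi T))].
Proof.
have le_lam_m r : lam r <= n - k.
  exact: leq_trans (hlam_mono (Ordinal hk) r (leq0n r)) (hlam1 (Ordinal hk) erefl).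
exists (@path_of_tableau k (n - k)); split.
- exact: is_cpath_path_of_tableau.
- exact: path_of_tableau_inj.
- exact: path_of_tableau_surj.
- exact: weight_path_of_tableau.
Qed.
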